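(* Let $V$ be a finite-dimensional vector space over a field and let $G$ be a (not necessarily amenable) group. Then a symmetric linear cellular automaton $\tau:V^G\to V^G$ is surjective if and only if it is pre-injective.
   Context: A linear cellular automaton over $G$ with alphabet $V$ is a linear map $\tau:V^G\to V^G$ for which there are a finite set $M\subset G$ and linear maps $A_m:V\to V$ ($m\in M$) with $\tau(f)(g)=\sum_{m\in M}A_mf(gm)$ for all $f\in V^G$, $g\in G$. Writing $V=\mathbb{K}^r$, the transpose $\tau'$ of $\tau$ is the linear map whose matrix with respect to the basis $\{\delta_g^i\}$ of finitely supported functions ($\delta_g^i(g)=e_i$, $\delta_g^i(h)=0$ for $h\neq g$) is the transpose of the matrix of $\tau$; explicitly $\tau'(f)(g)=\sum_{m\in M}A_m^{T}f(gm^{-1})$. $\tau$ is symmetric if $\tau'=\tau$. A linear map on $V^G$ is pre-injective if its restriction to the finitely supported functions is injective. *)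

From HB Require Import structures.
From mathcomp Require Import all_boot all_order all_algebra monoid.
Set Implicit Arguments. Unset Strict Implicit. Unset Printing Implicit Defensive.
Import GRing.Theory.
Local Open Scope ring_scope.

(* G : an arbitrary (possibly infinite) group, MathComp's [groupType] from
   boot/monoid.v.  V = K^r is represented by column vectors 'cV[K]_r.
   Configurations are functions G -> 'cV[K]_r. *)

Definition lca (G : groupType) (K : fieldType) (r : nat)
  (M : seq G) (A : G -> 'M[K]_r) (f : G -> 'cV[K]_r) : G -> 'cV[K]_r :=
  fun g => \sum_(m <- M) A m *m f (g * m)%g.

Definition lca_transpose (G : groupType) (K : fieldType) (r : nat)
  (M : seq G) (A : G -> 'M[K]_r) (f : G -> 'cV[K]_r) : G -> 'cV[K]_r :=
  fun g => \sum_(m <- M) (A m)^T *m f (g * m^-1)%g.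

Definition lca_symmetric (G : groupType) (K : fieldType) (r : nat)
  (M : seq G) (A : G -> 'M[K]_r) : Prop :=
  lca_transpose M A = lca M A.

Definition fin_supp (G : eqType) (K : fieldType) (r : nat) (f : G -> 'cV[K]_r) : Prop :=
  exists s : seq G, forall g, g \notin s -> f g = 0.

Definition surjective_map (X Y : Type) (t : X -> Y) : Prop :=
  forall y, exists x, t x = y.

Definition pre_injective (G : eqType) (K : fieldType) (r : nat)
  (t : (G -> 'cV[K]_r) -> (G -> 'cV[K]_r)) : Prop :=
  forall f1 f2, fin_supp f1 -> fin_supp f2 -> t f1 = t f2 -> f1 = f2.

(* Pair a finitely supported configuration f with an arbitrary one h by
   <f, h> = sum_g f(g)^T h(g).  Then <tau' f, h> = <f, tau h>: tau is the algebraic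
   adjoint of tau' restricted to finitely supported configurations.  If tau is onto,
   pairing f with preimages of the unit configurations recovers every coordinate of f
   from tau' f, so tau' is pre-injective.  Conversely, if tau' is pre-injective then
   tau' f |-> <f, y> is a well-defined linear functional on a subspace of the finitely
   supported scalar functions on G x {1..r}; by Zorn's lemma it is represented by some
   function h, and then tau h = y.  A symmetric tau is its own transpose. *)

From HB Require Import structures.
From mathcomp Require Import all_boot all_order all_algebra monoid.
From mathcomp Require Import boolp classical_sets.
Set Implicit Arguments.
Unset Strict Implicit.
Unset Printing Implicit Defensive.

Import GRing.Theory.
Local Open Scope ring_scope.
Local Open Scope classical_set_scope.

Lemma big_undup_support (T : eqType) (R : nmodType) (F : T -> R) (s1 s2 : seq T) :
  (forall x, F x != 0 -> x \in s1) -> (forall x, F x != 0 -> x \in s2) ->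
  \sum_(x <- undup s1) F x = \sum_(x <- undup s2) F x.
Proof.
have restrict (t u : seq T) : (forall x, F x != 0 -> x \in u) ->
    \sum_(x <- undup t) F x = \sum_(x <- [seq x <- undup t | x \in u]) F x.
  move=> Fu; rewrite big_filter [RHS]big_mkcond; apply: eq_bigr => x _.
  by case: ifP => // xu; apply/eqP; apply: contraFT xu => /Fu.
move=> F1 F2; rewrite (restrict s1 s2 F2) (restrict s2 s1 F1); apply: perm_big.
apply: uniq_perm; rewrite ?filter_uniq ?undup_uniq // => x.
by rewrite !mem_filter !mem_undup andbC.
Qed.

Definition fpair (T : eqType) (R : pzRingType) (s : seq T) (u h : T -> R) : R :=
  \sum_(x <- undup s) u x * h x.

Lemma fpair_support (T : eqType) (R : pzRingType) (u h : T -> R) (s1 s2 : seq T) :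
  (forall x, x \notin s1 -> u x = 0) -> (forall x, x \notin s2 -> u x = 0) ->
  fpair s1 u h = fpair s2 u h.
Proof.
move=> u1 u2; apply: big_undup_support => x; apply: contraR => xs.
  by rewrite u1 // mul0r.
by rewrite u2 // mul0r.
Qed.

Lemma chain_bound_seq (T : eqType) (U : Type) (F : set (set U))
    (P : T -> set U -> Prop) (l : seq T) :
  total_on F subset -> (forall t Y Z, Y `<=` Z -> P t Y -> P t Z) ->
  {in l, forall t, exists2 Y, F Y & P t Y} ->
  l = [::] \/ exists2 Y, F Y & {in l, forall t, P t Y}.
Proof.
move=> Ftot Pmono; elim: l => [|t l IHl] lF; first by left.
right; have [Y FY PY] := lF t (mem_head _ _).
have [->|[Z FZ PZ]] := IHl (fun u ul => lF u (mem_behead (s := t :: l) ul)).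
  by exists Y => // u; rewrite inE => /eqP ->.
have [YZ|ZY] := Ftot Y Z FY FZ; [exists Z|exists Y] => // u;
  rewrite inE => /predU1P[->|/PZ]; by [exact: Pmono PY|apply: Pmono].
Qed.

(* Partial functions are encoded as functional relations, so that Zorn_bigcup applies. *)
Section PartialFunctions.
Variables (T U : Type).
Implicit Types (S : set (T * U)) (h : T -> U).

Definition sdom S x := exists v, S (x, v).
Definition functional S := forall x v w, S (x, v) -> S (x, w) -> v = w.
Definition extends S h := forall x, sdom S x -> S (x, h x).

Lemma sdomS x S1 S2 : S1 `<=` S2 -> sdom S1 x -> sdom S2 x.
Proof. by move=> S12 [v /S12]; exists v. Qed.

Lemma extends_exists (u0 : U) S : exists h, extends S h.
Proof.
suff /choice[h hP] : forall x, exists v, sdom S x -> S (x, v) by exists h.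
move=> x; have [[v Sxv]|nSx] := pselect (sdom S x); first by exists v.
by exists u0 => Sx; case: nSx.
Qed.
End PartialFunctions.

(* The phi i span a subspace of the finitely supported functions X -> K and psi is a
   linear form on it (well defined by psi_ker); it is represented by a function h. *)
Section DualRepresentation.
Variables (X : eqType) (K : fieldType) (I : Type).
Variables (phi : I -> X -> K) (supp : I -> seq X) (psi : I -> K).
Hypothesis phi_supp : forall i x, x \notin supp i -> phi i x = 0.
Hypothesis phi_psi_comb : forall i j (a b : K), exists k,
  (forall x, phi k x = a * phi i x + b * phi j x) /\ psi k = a * psi i + b * psi j.
Hypothesis psi_ker : forall i, (forall x, phi i x = 0) -> psi i = 0.

Local Notation eval i h := (fpair (supp i) (phi i) h).

Definition solves (S : set (X * K)) := forall i h, extends S h ->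
  (forall x, phi i x != 0 -> sdom S x) -> eval i h = psi i.
Definition partial_solution S := functional S /\ solves S.

Lemma eval_comb i j k a b h : (forall x, phi k x = a * phi i x + b * phi j x) ->
  eval k h = a * eval i h + b * eval j h.
Proof.
move=> phik; pose s := supp i ++ supp j.
have phii x : x \notin s -> phi i x = 0.
  by rewrite mem_cat negb_or => /andP[/phi_supp-> _].
have phij x : x \notin s -> phi j x = 0.
  by rewrite mem_cat negb_or => /andP[_ /phi_supp->].
have phik_s x : x \notin s -> phi k x = 0.
  by move=> xs; rewrite phik phii ?phij ?mulr0 ?addr0.
rewrite (fpair_support h (@phi_supp k) phik_s).
rewrite (fpair_support h (@phi_supp i) phii) (fpair_support h (@phi_supp j) phij).
rewrite /fpair !mulr_sumr -big_split; apply: eq_bigr => x _.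
by rewrite phik mulrDl !mulrA.
Qed.

Lemma eval_phi0 i h : (forall x, phi i x = 0) -> eval i h = psi i.
Proof.
by move=> phi0; rewrite psi_ker // /fpair big1 // => x _; rewrite phi0 mul0r.
Qed.

Lemma chain_partial_solution (F : set (set (X * K))) :
  F `<=` partial_solution -> total_on F subset -> partial_solution (\bigcup_(Y in F) Y).
Proof.
move=> Fsol Ftot; set U := \bigcup_(Y in F) Y.
have Ufun : functional U.
  move=> x v w [Y FY Yv] [Z FZ Zw]; have [YZ|ZY] := Ftot Y Z FY FZ.
  - exact: (Fsol Z FZ).1 x v w (YZ _ Yv) Zw.
  - exact: (Fsol Y FY).1 x v w Yv (ZY _ Zw).
split=> // i h hU iU.
pose l := [seq x <- supp i | phi i x != 0].
have in_l x : phi i x != 0 -> x \in l.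
  by move=> nz; rewrite mem_filter nz; apply: contraR nz => /phi_supp ->.
have lF : {in l, forall x, exists2 Y, F Y & sdom Y x}.
  by move=> x; rewrite mem_filter => /andP[/iU[v [Y FY Yv]] _]; exists Y => //; exists v.
have [l0|[Y FY lY]] := chain_bound_seq Ftot (@sdomS _ _) lF.
  apply: eval_phi0 => x; apply/eqP; apply: contraT => /in_l.
  by rewrite l0.
apply: (Fsol Y FY).2 => [x [v Yv]|x /in_l/lY //].
have Uv : U (x, v) by exists Y.
by rewrite -(Ufun x v _ Uv (hU x (ex_intro _ v Uv))).
Qed.

Definition admissible (S : set (X * K)) x0 i := forall x, phi i x != 0 -> sdom S x \/ x = x0.

Lemma admissible_comb S x0 i j k a b :
  (forall x, phi k x = a * phi i x + b * phi j x) ->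
  admissible S x0 i -> admissible S x0 j -> admissible S x0 k.
Proof.
move=> phik ai aj x; have [i0|/ai//] := eqVneq (phi i x) 0.
have [j0|/aj//] := eqVneq (phi j x) 0.
by rewrite phik i0 j0 !mulr0 addr0 eqxx.
Qed.

(* The defect vanishes on the admissible i with phi i x0 = 0, hence is a multiple
   of the linear form i |-> phi i x0. *)
Lemma solves_defect S x0 h0 : solves S -> extends S h0 ->
  exists v, forall i, admissible S x0 i -> psi i - eval i h0 = phi i x0 * v.
Proof.
move=> Ssol h0S; pose c i := psi i - eval i h0.
have c0 i : admissible S x0 i -> phi i x0 = 0 -> c i = 0.
  move=> ai w0; rewrite /c Ssol ?subrr // => x nz; have [//|ex] := ai x nz.
  by move: nz; rewrite ex w0 eqxx.
have [[i0 ai0 w0]|none] := pselect (exists2 i, admissible S x0 i & phi i x0 != 0);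
  last first.
  exists 0 => i ai; rewrite mulr0; apply: c0 => //; apply/eqP; apply: contraT => nz.
  by case: none; exists i.
exists (c i0 / phi i0 x0) => i ai.
have [k [phik psik]] := phi_psi_comb i i0 (phi i0 x0) (- phi i x0).
have : c k = 0.
  by apply: c0; [exact: admissible_comb phik ai ai0|rewrite phik mulNr mulrC subrr].
rewrite /c psik (eval_comb h0 phik) opprD addrACA -mulrBr -mulrBr mulNr.
move/eqP; rewrite subr_eq0 => /eqP E.
by apply: (mulfI w0); rewrite E mulrCA [_ * (_ / _)]mulrC divfK.
Qed.

Lemma partial_solution_extend S x0 : partial_solution S -> ~ sdom S x0 ->
  exists v, partial_solution (S `|` [set (x0, v)]).
Proof.
move=> [Sfun Ssol] nSx0; have [h0 h0S] := extends_exists 0 S.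
have [v defect] := solves_defect x0 Ssol h0S.
exists (h0 x0 + v); split.
  move=> x a b [Sa|[ea ->]] [Sb|[eb ->]] //; first exact: Sfun Sa Sb.
  - by case: nSx0; exists a; rewrite -eb.
  - by case: nSx0; exists b; rewrite -ea.
move=> i h hS iS.
have hS0 x : sdom S x -> h x = h0 x.
  move=> [u Su]; have Shx : sdom (S `|` [set (x0, h0 x0 + v)]) x by exists u; left.
  have [|[ex _]] := hS x Shx; last by case: nSx0; exists u; rewrite -ex.
  by move/Sfun; apply; apply: h0S; exists u.
have hx0 : h x0 = h0 x0 + v.
  have [Sx0|[]//] := hS x0 (ex_intro _ (h0 x0 + v) (or_intror erefl)).
  by case: nSx0; exists (h x0).
have ai : admissible S x0 i.
  by move=> x /iS[u [Su|[-> _]]]; [left; exists u|right].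
rewrite -(subrK (eval i h0) (eval i h)) -(addrNK (eval i h0) (psi i)) defect //.
congr (_ + _); rewrite /fpair -sumrB.
under eq_bigr do rewrite -mulrBr.
rewrite (@big_undup_support _ _ _ _ [:: x0]) /= ?big_seq1 ?hx0 ?(addrC _ v) ?addrK //.
- by move=> x; apply: contraR => /phi_supp ->; rewrite mul0r.
- move=> x; have [->|/ai[/hS0->|->]] := eqVneq (phi i x) 0.
  + by rewrite mul0r eqxx.
  + by rewrite subrr mulr0 eqxx.
  + by rewrite mem_head.
Qed.

Theorem dual_representation : exists h, forall i, eval i h = psi i.
Proof.
have [S [Ssol Smax]] := Zorn_bigcup chain_partial_solution.
have Sfull x : sdom S x.
  apply: contrapT => nSx; have [v Sv] := partial_solution_extend Ssol nSx.
  apply: Smax Sv; split=> [y Sy|SvS]; first by left.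
  by apply: nSx; exists v; apply: SvS; right.
have [h hS] := extends_exists 0 S.
by exists h => i; apply: Ssol.2 => // x _; exact: Sfull.
Qed.

End DualRepresentation.

Section Pairing.
Variables (T : eqType) (K : fieldType) (r : nat).
Implicit Types (u v : 'cV[K]_r) (s : seq T) (f h : T -> 'cV[K]_r).

Definition vdot u v : K := (u^T *m v) 0 0.

Lemma vdotE u v : vdot u v = \sum_(i < r) u i 0 * v i 0.
Proof. by rewrite /vdot mxE; apply: eq_bigr => i _; rewrite mxE. Qed.

Lemma vdot_trmx (B : 'M[K]_r) u v : vdot (B^T *m u) v = vdot u (B *m v).
Proof. by rewrite /vdot trmx_mul trmxK mulmxA. Qed.

Lemma vdot_deltal i v : vdot (delta_mx i 0) v = v i 0.
Proof. by rewrite /vdot trmx_delta -rowE mxE. Qed.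

Lemma vdot_deltar u i : vdot u (delta_mx i 0) = u i 0.
Proof. by rewrite /vdot -colE !mxE. Qed.

Lemma vdot0l v : vdot 0 v = 0.
Proof. by rewrite /vdot trmx0 mul0mx mxE. Qed.

Lemma vdot0r u : vdot u 0 = 0.
Proof. by rewrite /vdot mulmx0 mxE. Qed.

Lemma vdot_suml (I : Type) (rI : seq I) (F : I -> 'cV[K]_r) v :
  vdot (\sum_(j <- rI) F j) v = \sum_(j <- rI) vdot (F j) v.
Proof. by rewrite /vdot raddf_sum mulmx_suml summxE. Qed.

Lemma vdot_sumr (I : Type) (rI : seq I) u (F : I -> 'cV[K]_r) :
  vdot u (\sum_(j <- rI) F j) = \sum_(j <- rI) vdot u (F j).
Proof. by rewrite /vdot mulmx_sumr summxE. Qed.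

Definition coords s := [seq (g, i) | g <- s, i <- enum 'I_r].

Lemma mem_coords s g i : ((g, i) \in coords s) = (g \in s).
Proof.
apply/allpairsP/idP => [[[g' i'] /= [gs _ [-> _]]] //|gs].
by exists (g, i); rewrite mem_enum.
Qed.

Definition pairing s f h : K := \sum_(g <- undup s) vdot (f g) (h g).

Lemma pairing_coords s f h :
  pairing s f h = fpair (coords s) (fun x => f x.1 x.2 0) (fun x => h x.1 x.2 0).
Proof.
have coords_undup : coords s =i coords (undup s).
  by move=> [g i]; rewrite !mem_coords mem_undup.
rewrite /fpair (perm_big _ (perm_undup coords_undup)) undup_id; last first.
  by rewrite allpairs_uniq ?undup_uniq ?enum_uniq // => -[? ?] [? ?] _ _ [-> ->].
by rewrite big_allpairs; apply: eq_bigr => g _; rewrite vdotE big_enum.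
Qed.

Definition supp_in s f := forall g, g \notin s -> f g = 0.

Lemma supp_in_catl s1 s2 f : supp_in s1 f -> supp_in (s1 ++ s2) f.
Proof. by move=> fs g; rewrite mem_cat negb_or => /andP[/fs]. Qed.

Lemma supp_in_catr s1 s2 f : supp_in s2 f -> supp_in (s1 ++ s2) f.
Proof. by move=> fs g; rewrite mem_cat negb_or => /andP[_ /fs]. Qed.

Lemma supp_in_comb s1 s2 a b f1 f2 : supp_in s1 f1 -> supp_in s2 f2 ->
  supp_in (s1 ++ s2) (fun g => a *: f1 g + b *: f2 g).
Proof.
move=> /(supp_in_catl (s2 := s2)) f1s /(supp_in_catr (s1 := s1)) f2s g gs.
by rewrite f1s // f2s // !scaler0 addr0.
Qed.

Lemma pairing_supp_in s1 s2 f h : supp_in s1 f -> supp_in s2 f ->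
  pairing s1 f h = pairing s2 f h.
Proof.
by move=> f1 f2; apply: big_undup_support => g; apply: contraR;
  [move/f1|move/f2] => ->; rewrite vdot0l.
Qed.

Lemma pairing_combl s a b f1 f2 h :
  pairing s (fun g => a *: f1 g + b *: f2 g) h = a * pairing s f1 h + b * pairing s f2 h.
Proof.
rewrite /pairing !mulr_sumr -big_split; apply: eq_bigr => g _.
by rewrite /vdot linearD /= !linearZ /= mulmxDl -!scalemxAl !mxE.
Qed.

Definition cfg_delta g i : T -> 'cV[K]_r := fun g' => if g' == g then delta_mx i 0 else 0.

Lemma pairing_deltal g i h : pairing [:: g] (cfg_delta g i) h = h g i 0.
Proof. by rewrite /pairing /= big_seq1 /cfg_delta eqxx vdot_deltal. Qed.

Lemma pairing_deltar s f g i : supp_in s f -> pairing s f (cfg_delta g i) = f g i 0.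
Proof.
move=> fs; rewrite /pairing (@big_undup_support _ _ _ _ [:: g]) /= ?big_seq1
  /cfg_delta ?eqxx ?vdot_deltar //.
- by move=> g'; apply: contraR => /fs ->; rewrite vdot0l.
- by move=> g'; case: ifP => [/eqP->|_]; rewrite ?mem_head // vdot0r eqxx.
Qed.
End Pairing.

Arguments cfg_delta {T K r} g i.

Section LinearCellularAutomaton.
Variables (G : groupType) (K : fieldType) (r : nat) (M : seq G) (A : G -> 'M[K]_r).
Local Notation tau := (lca M A).
Local Notation tau' := (lca_transpose M A).
Implicit Types (s : seq G) (f h : G -> 'cV[K]_r).

Definition translate_supp s := [seq (g * m)%g | g <- s, m <- M].

Lemma lca_transpose_supp_in s f : supp_in s f -> supp_in (translate_supp s) (tau' f).
Proof.
move=> fs g gs; rewrite /lca_transpose big_seq big1 // => m mM.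
rewrite fs ?mulmx0 //; apply: contra gs => gms.
by rewrite -(mulgVK m g); apply: allpairs_f.
Qed.

Lemma lca_transpose_comb a b f1 f2 :
  tau' (fun g => a *: f1 g + b *: f2 g) = fun g => a *: tau' f1 g + b *: tau' f2 g.
Proof.
apply: funext => g; rewrite /lca_transpose !scaler_sumr -big_split.
by apply: eq_bigr => m _; rewrite mulmxDr !scalemxAr.
Qed.

Lemma lca_transpose0 : tau' (fun _ => 0) = fun _ => 0.
Proof. by apply: funext => g; rewrite /lca_transpose big1 // => m _; rewrite mulmx0. Qed.

Lemma pairing_lca_transpose s f h : supp_in s f ->
  pairing (translate_supp s) (tau' f) h = pairing s f (tau h).
Proof.
move=> fs; pose Phi m g := vdot (f g) (A m *m h (g * m)%g).
have -> : pairing (translate_supp s) (tau' f) h =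
    \sum_(m <- M) \sum_(g <- undup (translate_supp s)) Phi m (g * m^-1)%g.
  rewrite exchange_big; apply: eq_bigr => g _; rewrite vdot_suml.
  by apply: eq_bigr => m _; rewrite vdot_trmx /Phi mulgVK.
have -> : pairing s f (tau h) = \sum_(m <- M) \sum_(g <- undup s) Phi m g.
  by rewrite exchange_big; apply: eq_bigr => g _; rewrite vdot_sumr.
rewrite big_seq [RHS]big_seq; apply: eq_bigr => m mM.
rewrite -(big_map (fun g => g * m^-1)%g predT (Phi m)).
rewrite -[X in \sum_(_ <- X) _]undup_id; last first.
  by rewrite map_inj_uniq ?undup_uniq // => x y /mulIg.
have Phi0 g : g \notin s -> Phi m g = 0 by move/fs => f0; rewrite /Phi f0 vdot0l.
apply: big_undup_support => g; apply: contraR => gs; last by rewrite Phi0.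
rewrite Phi0 //; apply: contra gs => g_s; apply/mapP; exists (g * m)%g.
  by rewrite mem_undup; apply: allpairs_f.
by rewrite mulgK.
Qed.

Lemma lca_surj_preinj_transpose : surjective_map tau -> pre_injective tau'.
Proof.
move=> tau_surj f1 f2 [s1 f1s] [s2 f2s] e; apply: funext => g.
have {f1s}f1s : supp_in s1 f1 := f1s; have {f2s}f2s : supp_in s2 f2 := f2s.
apply/matrixP => i j; rewrite (ord1 j); have [h tau_h] := tau_surj (cfg_delta g i).
rewrite -(pairing_deltar g i f1s) -(pairing_deltar g i f2s) -tau_h.
rewrite -!pairing_lca_transpose // e; apply: pairing_supp_in.
  by rewrite -e; exact: lca_transpose_supp_in f1s.
exact: lca_transpose_supp_in f2s.
Qed.

(* The images tau' f of finitely supported f, as an index family for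
   dual_representation. *)
Definition fsconfig := {p : (G -> 'cV[K]_r) * seq G | supp_in p.2 p.1}.

Definition transpose_coord (p : fsconfig) (x : G * 'I_r) := tau' (sval p).1 x.1 x.2 0.

Definition transpose_coord_supp (p : fsconfig) := coords r (translate_supp (sval p).2).

Lemma transpose_coord_supp_in p x :
  x \notin transpose_coord_supp p -> transpose_coord p x = 0.
Proof.
case: x => g i; rewrite mem_coords => gs.
by rewrite /transpose_coord (lca_transpose_supp_in (svalP p) gs) mxE.
Qed.

Lemma fsconfig_comb y p q a b : exists k,
  (forall x, transpose_coord k x = a * transpose_coord p x + b * transpose_coord q x) /\
  pairing (sval k).2 (sval k).1 y =
    a * pairing (sval p).2 (sval p).1 y + b * pairing (sval q).2 (sval q).1 y.
Proof.
case: p q => [[f1 s1] /= f1s] [[f2 s2] /= f2s].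
exists (exist _ (_, _) (supp_in_comb a b f1s f2s)); split=> [[g i]|] /=.
  by rewrite /transpose_coord lca_transpose_comb !mxE.
rewrite pairing_combl (pairing_supp_in y (supp_in_catl (s2 := s2) f1s) f1s).
by rewrite (pairing_supp_in y (supp_in_catr (s1 := s1) f2s) f2s).
Qed.

Lemma transpose_coord_ker y : pre_injective tau' -> forall p : fsconfig,
  (forall x, transpose_coord p x = 0) -> pairing (sval p).2 (sval p).1 y = 0.
Proof.
move=> preinj [[f s] /= fs] coord0.
have tau'f : tau' f = tau' (fun _ => 0).
  rewrite lca_transpose0; apply: funext => g; apply/matrixP => i j.
  by rewrite (ord1 j) mxE; exact: (coord0 (g, i)).
rewrite (preinj _ _ (ex_intro _ s fs) (ex_intro _ [::] (fun _ _ => erefl)) tau'f).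
by rewrite /pairing big1 // => g _; rewrite vdot0l.
Qed.

Lemma lca_transpose_preinj_surj : pre_injective tau' -> surjective_map tau.
Proof.
move=> preinj y; have [h' h'_sol] := dual_representation
  transpose_coord_supp_in (fsconfig_comb y) (transpose_coord_ker y preinj).
exists (fun g => \col_i h' (g, i)); apply: funext => g; apply/matrixP => i j.
rewrite (ord1 j); have dgs : supp_in [:: g] (cfg_delta g i : G -> 'cV[K]_r).
  by move=> g'; rewrite inE /cfg_delta => /negbTE ->.
have := h'_sol (exist _ (cfg_delta g i, [:: g]) dgs); rewrite /= pairing_deltal => <-.
rewrite -(pairing_deltal g i (tau _)) -pairing_lca_transpose // pairing_coords.
by apply: eq_bigr => -[g' i'] _; rewrite mxE.
Qed.

End LinearCellularAutomaton.

Theorem corollary1p9 (G : groupType) (K : fieldType) (r : nat)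
  (M : seq G) (A : G -> 'M[K]_r) :
  uniq M ->
  lca_symmetric M A ->
  (surjective_map (lca M A) <-> pre_injective (lca M A)).
Proof.
move=> _ symA; rewrite -{2}symA; split; first exact: lca_surj_preinj_transpose.
exact: lca_transpose_preinj_surj.
Qed.
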